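(* Let $A$ and $B$ be two $m\times m$ coloring matrices. If $A$ and $B$ are tree coloring equivalent, then the sum of all entries of $A^TA+A^2$ equals the sum of all entries of $B^TB+B^2$.
   Context: A plane tree is an unlabeled rooted tree in which the children of every vertex are linearly ordered. A coloring matrix is an $m\times m$ matrix $A=(a_{ij})$ with entries in $\{0,1\}$. An $A$-coloring of a plane tree assigns to each vertex a color in $\{1,\dots,m\}$ such that whenever a vertex of color $j$ is a child of a vertex of color $i$, $a_{ij}=1$. Let $t_A(n)$ be the number of pairs (plane tree with $n$ vertices, $A$-coloring of it). Two $m\times m$ coloring matrices $A,B$ are tree coloring equivalent if $t_A(n)=t_B(n)$ for all $n\ge1$. *)

From mathcomp Require Import all_boot all_algebra.
From Stdlib Require Import List.
Set Implicit Arguments. Unset Strict Implicit. Unset Printing Implicit Defensive.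
Import GRing.Theory.
Local Open Scope ring_scope.

Definition coloring_matrix (m : nat) (A : 'M[int]_m) : Prop :=
  forall i j, A i j = 0 \/ A i j = 1.

(* A plane tree together with a coloring of its vertices by colors 'I_m:
   a rooted tree whose children are ordered (a list), each vertex carrying
   a color. *)
Inductive ctree (m : nat) : Type :=
  CNode : 'I_m -> list (ctree m) -> ctree m.

Definition root_color m (t : ctree m) : 'I_m := let: CNode c _ := t in c.

Fixpoint nverts m (t : ctree m) : nat :=
  let: CNode _ cs := t in
  (1 + (fix go (l : list (ctree m)) : nat :=
          match l with nil => 0 | cons c l' => nverts c + go l' end) cs)%N.

Fixpoint is_A_coloring m (A : 'M[int]_m) (t : ctree m) : bool :=
  let: CNode i cs := t in
  (fix go (l : list (ctree m)) : bool :=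
     match l with
     | nil => true
     | cons c l' => (A i (root_color c) == 1) && is_A_coloring A c && go l'
     end) cs.

Definition has_card (T : Type) (P : T -> Prop) (k : nat) : Prop :=
  exists l : list T, NoDup l /\ (forall x, In x l <-> P x) /\ length l = k.

Definition tA_is m (A : 'M[int]_m) (n k : nat) : Prop :=
  has_card (fun t : ctree m => nverts t = n /\ is_A_coloring A t) k.

Definition tree_coloring_equivalent m (A B : 'M[int]_m) : Prop :=
  forall n k, (1 <= n)%N -> (tA_is A n k <-> tA_is B n k).

Definition entry_sum m (M : 'M[int]_m) : int := \sum_(i < m) \sum_(j < m) M i j.

(** A plane tree on three vertices is either a path i -> j -> k or a root i
    with two leaf children j, k, so t_A(3) is the number of pairs of A-edges
    (i,j),(j,k) plus the number of pairs of A-edges (i,j),(i,k) with a common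
    tail.  For a 0/1 matrix the first count is the entry sum of A^2 and the
    second is the entry sum of A^T A, since (A^T A)_jk = sum_i a_ij a_ik.
    Tree coloring equivalent matrices share t_A(3), hence these sums. *)

From mathcomp Require Import all_boot all_algebra zify.
From Stdlib Require List FinFun.
Import GRing.Theory.
Local Open Scope ring_scope.

Lemma has_card_unique (T : Type) (P : T -> Prop) (k1 k2 : nat) :
  has_card P k1 -> has_card P k2 -> k1 = k2.
Proof.
move=> [l1 [uniq1 [mem1 <-]]] [l2 [uniq2 [mem2 <-]]].
apply/eqP; rewrite eqn_leq; apply/andP; split; apply/leP;
  apply: List.NoDup_incl_length => // x.
- by move/mem1/mem2.
- by move/mem2/mem1.
Qed.

Lemma In_mem (T : eqType) (x : T) (s : seq T) : List.In x s <-> x \in s.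
Proof.
elim: s => [|y s IHs] /=; first by split.
rewrite in_cons; split.
- by case=> [->|/IHs ->]; rewrite ?eqxx ?orbT.
- by case/orP=> [/eqP->|/IHs]; [left|right].
Qed.

Lemma uniq_NoDup (T : eqType) (s : seq T) : uniq s -> List.NoDup s.
Proof.
elim: s => [|x s IHs] /=; first by constructor.
by case/andP=> /negP x_notin_s /IHs; constructor=> // /In_mem.
Qed.

Lemma has_card_injective_image (T : finType) (U : Type) (f : T -> U)
    (p : pred T) (P : U -> Prop) :
  injective f -> (forall u, P u <-> exists2 x, p x & u = f x) ->
  has_card P #|p|.
Proof.
move=> f_inj P_image; exists (List.map f (enum p)); split; [|split].
- by apply: FinFun.Injective_map_NoDup; [exact: f_inj | exact/uniq_NoDup/enum_uniq].
- move=> u; rewrite P_image List.in_map_iff; split.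
    by move=> [x [<- /In_mem]]; rewrite mem_enum; exists x.
  by move=> [x px ->]; exists x; split; rewrite // In_mem mem_enum.
- rewrite List.length_map cardE.
  by elim: (enum p) => //= x s ->.
Qed.

Lemma natr_card (R : pzSemiRingType) (T : finType) (p : pred T) :
  #|p|%:R = \sum_(x : T) (p x)%:R :> R.
Proof.
rewrite -sum1_card natr_sum big_mkcond.
by apply: eq_bigr => x _; rewrite unfold_in; case: (p x).
Qed.

Lemma entry_sumD (m : nat) (M N : 'M[int]_m) :
  entry_sum (M + N) = entry_sum M + entry_sum N.
Proof.
rewrite /entry_sum -big_split; apply: eq_bigr => i _.
by rewrite -big_split; apply: eq_bigr => j _; rewrite mxE.
Qed.

Lemma entry_sum_mulmx (m : nat) (M N : 'M[int]_m) :
  entry_sum (M *m N) = \sum_i \sum_j \sum_k M i j * N j k.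
Proof.
by apply: eq_bigr => i _; rewrite exchange_big; apply: eq_bigr => k _; rewrite mxE.
Qed.

Lemma entry_sum_trmx_mul (m : nat) (M N : 'M[int]_m) :
  entry_sum (M^T *m N) = \sum_i \sum_j \sum_k M i j * N i k.
Proof.
rewrite entry_sum_mulmx [LHS]exchange_big.
by do 3!apply: eq_bigr => ? _; rewrite mxE.
Qed.

Lemma sum_triple (R : nmodType) (I J K : finType) (F : I * J * K -> R) :
  \sum_(x : I * J * K) F x = \sum_i \sum_j \sum_k F (i, j, k).
Proof. by rewrite pair_bigA pair_bigA; apply: eq_bigr => [[[i j] k]]. Qed.

Section ThreeVertexTrees.

Context {m : nat}.

Definition triple := ('I_m * 'I_m * 'I_m)%type.

Definition path3 (i j k : 'I_m) : ctree m := CNode i [:: CNode j [:: CNode k [::]]].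

Definition cherry (i j k : 'I_m) : ctree m := CNode i [:: CNode j [::]; CNode k [::]].

Definition tree3 (x : triple + triple) : ctree m :=
  match x with
  | inl (i, j, k) => path3 i j k
  | inr (i, j, k) => cherry i j k
  end.

Lemma tree3_inj : injective tree3.
Proof.
by case=> [[[i j] k]|[[i j] k]] [[[i' j'] k']|[[i' j'] k']] //= [-> -> ->].
Qed.

Lemma nverts_gt0 (t : ctree m) : (0 < nverts t)%N.
Proof. by case: t. Qed.

Lemma nverts_eq1 (t : ctree m) : nverts t = 1%N -> t = CNode (root_color t) [::].
Proof. by case: t => c [|t ts] //= sz; have := nverts_gt0 t; lia. Qed.

Lemma nverts_eq3 (t : ctree m) : nverts t = 3%N <-> exists x, t = tree3 x.
Proof.
split; last by case=> [[[[i j] k]|[[i j] k]] ->].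
have := nverts_gt0; case: t => i [|t1 [|t2 [|t3 ts]]] //= gt0.
- case: t1 => j [|u1 [|u2 us]] //= => [sz|]; last by have := gt0 u1; have := gt0 u2; lia.
  have /nverts_eq1 u1E : nverts u1 = 1%N by lia.
  by exists (inl (i, j, root_color u1)); rewrite u1E.
- move=> sz; have t1_gt0 := gt0 t1; have t2_gt0 := gt0 t2.
  have /nverts_eq1 t1E : nverts t1 = 1%N by lia.
  have /nverts_eq1 t2E : nverts t2 = 1%N by lia.
  by exists (inr (i, root_color t1, root_color t2)); rewrite t1E t2E.
- by have := gt0 t1; have := gt0 t2; have := gt0 t3; lia.
Qed.

Variable A : 'M[int]_m.

Definition A_colored_tree3 : pred (triple + triple) :=
  fun x => is_A_coloring A (tree3 x).

Lemma tA_3 : tA_is A 3 #|A_colored_tree3|.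
Proof.
apply: has_card_injective_image; first exact: tree3_inj.
move=> t; rewrite nverts_eq3; split; first by move=> [[x ->] colored]; exists x.
by move=> [x colored ->]; split => //; exists x.
Qed.

Hypothesis A01 : coloring_matrix A.

Lemma coloring_matrix_indicator (i j : 'I_m) : (A i j == 1)%:R = A i j.
Proof. by case: (A01 i j) => ->. Qed.

Lemma entry_sum_tree3 :
  entry_sum (A^T *m A + A *m A) = #|A_colored_tree3|%:R.
Proof.
have indicatorM (a b : bool) : (a && b)%:R = a%:R * b%:R :> int.
  by rewrite -natrM mulnb.
rewrite natr_card big_sumType !sum_triple addrC entry_sumD.
rewrite entry_sum_trmx_mul entry_sum_mulmx.
congr (_ + _); do 3!(apply: eq_bigr => ? _);
  by rewrite /A_colored_tree3 /= !andbT indicatorM !coloring_matrix_indicator.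
Qed.

End ThreeVertexTrees.

Theorem theorem11 (m : nat) (A B : 'M[int]_m) :
  coloring_matrix A -> coloring_matrix B ->
  tree_coloring_equivalent A B ->
  entry_sum (A^T *m A + A *m A) = entry_sum (B^T *m B + B *m B).
Proof.
move=> A01 B01 equivAB.
rewrite !entry_sum_tree3 //; congr (_%:R).
have tA3_B : tA_is A 3 #|A_colored_tree3 B| by apply/(equivAB 3%N _ isT); exact: tA_3.
exact: has_card_unique (tA_3 A) tA3_B.
Qed.
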